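(* Let $(a,b,c)^T\in\mathbb{Z}^3$ with $\gcd(a,b,c)=1$, and let $K=\{(x,y,z)^T\in\mathbb{R}^3 : ax+by+cz=0\}$. Then there exists an orthogonal lattice basis of $K$, i.e. two mutually orthogonal vectors $u,v\in\mathbb{Z}^3\cap K$ forming a basis of $K$.
   Context: A lattice basis of $K$ means a basis of the real vector space $K$ consisting of vectors of $\mathbb{Z}^3$; orthogonality is with respect to the standard inner product on $\mathbb{R}^3$. *)

From Stdlib Require Import ZArith Reals.

Definition embed (u : Z * Z * Z) : R * R * R :=
  let '(u1, u2, u3) := u in (IZR u1, IZR u2, IZR u3).

Definition inK (a b c : Z) (p : R * R * R) : Prop :=
  let '(x, y, z) := p in (IZR a * x + IZR b * y + IZR c * z = 0)%R.

Definition dotR (p q : R * R * R) : R :=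
  let '(x1, y1, z1) := p in let '(x2, y2, z2) := q in
  (x1 * x2 + y1 * y2 + z1 * z2)%R.

Definition lincomb (s t : R) (p q : R * R * R) : R * R * R :=
  let '(x1, y1, z1) := p in let '(x2, y2, z2) := q in
  (s * x1 + t * x2, s * y1 + t * y2, s * z1 + t * z2)%R.

Definition is_basis_of_K (a b c : Z) (p q : R * R * R) : Prop :=
  inK a b c p /\ inK a b c q /\
  (forall s t : R, lincomb s t p q = (0, 0, 0)%R -> s = 0%R /\ t = 0%R) /\
  (forall r : R * R * R, inK a b c r -> exists s t : R, r = lincomb s t p q).

(** The integer vector [u = (-b,a,0)] (or [(1,0,0)] if [a = b = 0]) lies in
    [K], and so does [w = n × u] with [n = (a,b,c)]; [u] and [w] are
    orthogonal.  The gcd condition makes [n] nonzero, so by Lagrange's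
    identity [|w|² = |n|²|u|² > 0], and two nonzero orthogonal vectors of the
    plane [K] form a basis of it. *)

From Stdlib Require Import ZArith Reals Lia Lra Nsatz.
Open Scope R_scope.

Definition crossR (p q : R * R * R) : R * R * R :=
  let '(x1, y1, z1) := p in let '(x2, y2, z2) := q in
  (y1 * z2 - z1 * y2, z1 * x2 - x1 * z2, x1 * y2 - y1 * x2).

Definition crossZ (p q : Z * Z * Z) : Z * Z * Z :=
  let '(x1, y1, z1) := p in let '(x2, y2, z2) := q in
  (y1 * z2 - z1 * y2, z1 * x2 - x1 * z2, x1 * y2 - y1 * x2)%Z.

Definition scaleR (k : R) (p : R * R * R) : R * R * R :=
  let '(x, y, z) := p in (k * x, k * y, k * z).

Ltac destruct_triples :=
  repeat match goal with p : (R * R * R)%type |- _ => destruct p as [[? ?] ?] end.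

Lemma dotR_comm (p q : R * R * R) : dotR p q = dotR q p.
Proof. destruct_triples; simpl; ring. Qed.

Lemma dotR_lincomb_r (r p q : R * R * R) (s t : R) :
  dotR r (lincomb s t p q) = s * dotR r p + t * dotR r q.
Proof. destruct_triples; simpl; ring. Qed.

Lemma dotR_0_r (p : R * R * R) : dotR p (0, 0, 0) = 0.
Proof. destruct_triples; simpl; ring. Qed.

Lemma dotR_self_pos (p : R * R * R) : p <> (0, 0, 0) -> 0 < dotR p p.
Proof.
  destruct p as [[x y] z]; simpl; intros Hp.
  destruct (Req_dec x 0), (Req_dec y 0), (Req_dec z 0); subst;
    try (exfalso; apply Hp; reflexivity); nra.
Qed.

Lemma dotR_cross_l (p q : R * R * R) : dotR p (crossR p q) = 0.
Proof. destruct_triples; simpl; ring. Qed.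

Lemma dotR_cross_r (p q : R * R * R) : dotR q (crossR p q) = 0.
Proof. destruct_triples; simpl; ring. Qed.

Lemma dotR_cross_cross (p q : R * R * R) :
  dotR (crossR p q) (crossR p q) = dotR p p * dotR q q - dotR p q * dotR p q.
Proof. destruct_triples; simpl; ring. Qed.

Lemma scaleRK (k : R) (p : R * R * R) : k <> 0 -> scaleR (/ k) (scaleR k p) = p.
Proof. intros Hk; destruct_triples; simpl; f_equal; [f_equal|]; field; exact Hk. Qed.

Lemma lincomb_div (k s t : R) (p q : R * R * R) :
  lincomb (s / k) (t / k) p q = scaleR (/ k) (lincomb s t p q).
Proof. destruct_triples; simpl; unfold Rdiv; f_equal; [f_equal|]; ring. Qed.

Lemma orthogonal_lin_indep (p q : R * R * R) :
  p <> (0, 0, 0) -> q <> (0, 0, 0) -> dotR p q = 0 ->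
  forall s t : R, lincomb s t p q = (0, 0, 0) -> s = 0 /\ t = 0.
Proof.
  intros Hp Hq Hpq s t E.
  pose proof (dotR_self_pos p Hp) as Pp.
  pose proof (dotR_self_pos q Hq) as Pq.
  pose proof (f_equal (dotR p) E) as Ep.
  pose proof (f_equal (dotR q) E) as Eq.
  rewrite dotR_lincomb_r, dotR_0_r, Hpq in Ep.
  rewrite dotR_lincomb_r, dotR_0_r, dotR_comm, Hpq in Eq.
  split; nra.
Qed.

Lemma cross_decomposition (n u r : R * R * R) : dotR n u = 0 -> dotR n r = 0 ->
  scaleR (dotR n n * dotR u u) r =
  lincomb (dotR n n * dotR r u) (dotR r (crossR n u)) u (crossR n u).
Proof.
  destruct n as [[n1 n2] n3], u as [[u1 u2] u3], r as [[x y] z]; simpl.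
  intros n_orth_u n_orth_r; f_equal; [f_equal|]; nsatz.
Qed.

Section OrthogonalFrame.

Variables n u : R * R * R.
Hypothesis n_ne0 : n <> (0, 0, 0).
Hypothesis u_ne0 : u <> (0, 0, 0).
Hypothesis n_orth_u : dotR n u = 0.

Lemma cross_ne0 : crossR n u <> (0, 0, 0).
Proof.
  intros E.
  pose proof (dotR_self_pos n n_ne0). pose proof (dotR_self_pos u u_ne0).
  pose proof (dotR_cross_cross n u) as L.
  rewrite E, n_orth_u in L; simpl in L; nra.
Qed.

Lemma cross_span (r : R * R * R) : dotR n r = 0 ->
  exists s t : R, r = lincomb s t u (crossR n u).
Proof.
  intros n_orth_r.
  set (k := dotR n n * dotR u u).
  assert (Hk : k <> 0).
  { pose proof (dotR_self_pos n n_ne0). pose proof (dotR_self_pos u u_ne0).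
    unfold k; nra. }
  exists (dotR n n * dotR r u / k), (dotR r (crossR n u) / k).
  rewrite lincomb_div, <- cross_decomposition by assumption.
  symmetry; apply scaleRK; exact Hk.
Qed.

End OrthogonalFrame.

Lemma embed_crossZ (p q : Z * Z * Z) :
  embed (crossZ p q) = crossR (embed p) (embed q).
Proof.
  destruct p as [[? ?] ?], q as [[? ?] ?]; simpl.
  rewrite !minus_IZR, !mult_IZR; reflexivity.
Qed.

Lemma embed_ne0 (p : Z * Z * Z) : p <> (0, 0, 0)%Z -> embed p <> (0, 0, 0).
Proof.
  destruct p as [[x y] z]; simpl; intros Hp E; injection E as Ex Ey Ez.
  apply Hp; apply eq_IZR_R0 in Ex, Ey, Ez; subst; reflexivity.
Qed.

Lemma inK_dotR (a b c : Z) (p : R * R * R) :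
  inK a b c p <-> dotR (embed (a, b, c)) p = 0.
Proof. destruct_triples; reflexivity. Qed.

Lemma gcd_eq1_ne0 (a b c : Z) : Z.gcd (Z.gcd a b) c = 1%Z -> (a, b, c) <> (0, 0, 0)%Z.
Proof. intros Hgcd E; injection E as -> -> ->; discriminate Hgcd. Qed.

Lemma exists_orthogonalZ (a b c : Z) :
  exists u : Z * Z * Z, u <> (0, 0, 0)%Z /\ dotR (embed (a, b, c)) (embed u) = 0.
Proof.
  destruct (Z.eq_dec a 0) as [->|Ha]; [destruct (Z.eq_dec b 0) as [->|Hb]|].
  - exists (1, 0, 0)%Z; split; [discriminate | simpl; ring].
  - exists (- b, 0, 0)%Z; split; [intros E; injection E; lia | simpl; ring].
  - exists (- b, a, 0)%Z; split; [intros E; injection E; lia | simpl; rewrite opp_IZR; ring].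
Qed.

Theorem lemma2 (a b c : Z) (Hgcd : Z.gcd (Z.gcd a b) c = 1%Z) :
  exists u v : Z * Z * Z,
    is_basis_of_K a b c (embed u) (embed v) /\
    dotR (embed u) (embed v) = 0%R.
Proof.
  pose proof (gcd_eq1_ne0 a b c Hgcd) as Habc.
  pose proof (embed_ne0 _ Habc) as Hn.
  destruct (exists_orthogonalZ a b c) as [u [Hu Hnu]].
  pose proof (embed_ne0 _ Hu) as Hu'.
  assert (Huw : dotR (embed u) (crossR (embed (a, b, c)) (embed u)) = 0)
    by apply dotR_cross_r.
  exists u, (crossZ (a, b, c) u); rewrite embed_crossZ.
  split; [split; [|split; [|split]] | exact Huw].
  - apply inK_dotR; exact Hnu.
  - apply inK_dotR; apply dotR_cross_l.
  - apply orthogonal_lin_indep; [exact Hu' | apply cross_ne0 | ]; assumption.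
  - intros r Hr; apply inK_dotR in Hr; apply cross_span; assumption.
Qed.
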